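(* For every $n\ge9$ we have $\tilde b(TC_n)\le 2^{n/4}(2^{-1/2}+2^{-1/4})$.
   Context: The triangular cycle $TC_n$ is the graph with vertex set $[n]$ in which $i\ne j$ are adjacent iff $i-j\pmod n\in\{n-2,n-1,1,2\}$. $\mathrm{Ind}(G)$ is the independence complex of $G$ (including the empty face), and $\tilde b(G)=\sum_{i\ge-1}\dim_{\mathbb{K}}\widetilde H_i(\mathrm{Ind}(G);\mathbb{K})$ for a fixed field $\mathbb{K}$. *)

From mathcomp Require Import all_boot all_order all_algebra.
Set Implicit Arguments. Unset Strict Implicit. Unset Printing Implicit Defensive.
Import GRing.Theory.
Local Open Scope ring_scope.

Definition tc_adj (n : nat) (i j : 'I_n) : bool :=
  (i != j) && (((i + n - j) %% n)%N \in [:: (n - 2)%N; (n - 1)%N; 1%N; 2%N]).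

(* independent sets of TC_n (faces of Ind(TC_n), including the empty face) *)
Definition tc_indep (n : nat) (S : {set 'I_n}) : bool :=
  [forall i in S, forall j in S, ~~ tc_adj i j].

(* faces with s vertices (dimension s-1) *)
Definition faces (n s : nat) : {set {set 'I_n}} :=
  [set S | tc_indep S & #|S| == s].

(* Simplicial boundary map C_{s} (faces with s+1 vertices) -> C_{s-1} (faces with s vertices),
   as a matrix acting on row vectors, basis = enumeration of faces, vertices ordered by <. *)
Definition bd (K : fieldType) (n s : nat) : 'M[K]_(#|faces n s.+1|, #|faces n s|) :=
  \matrix_(i < #|faces n s.+1|, j < #|faces n s|)
    (let sigma : {set 'I_n} := enum_val i in let tau : {set 'I_n} := enum_val j in
     if tau \subset sigma then
       \sum_(v in sigma :\: tau) (-1) ^+ #|[set u in sigma | (u < v)%N]|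
     else 0).

(* kernel of the boundary map going out of C_{s-1}; for s = 0 (the empty face,
   reduced chain group in degree -1) the outgoing map is 0, so the kernel is everything. *)
Definition kerC (K : fieldType) (n s : nat) : 'M[K]_(#|faces n s|) :=
  match s return 'M[K]_(#|faces n s|) with
  | 0 => 1%:M
  | s'.+1 => kermx (bd K n s')
  end.

(* dim_K of reduced homology \tilde H_{s-1}(Ind(TC_n); K) = dim (ker / (im cap ker)) *)
Definition redhom_dim (K : fieldType) (n s : nat) : nat :=
  (\rank (kerC K n s) - \rank (bd K n s :&: kerC K n s)%MS)%N.

(* \tilde b(TC_n) = sum over i >= -1 of dim \tilde H_i; faces have at most n vertices *)
Definition btilde (K : fieldType) (n : nat) : nat :=
  (\sum_(s < n.+2) redhom_dim K n s)%N.

(* When the boundary maps d satisfy d d = 0, rank-nullity in each degree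
   gives  btilde = #faces - 2 * sum rank d.  For a vertex v, the faces split into those of
   the deletion and the cones v + S over the faces S of the link, and the boundary matrix
   contains a block lower triangular submatrix carrying the boundaries of the deletion and
   (up to signs) of the link; so btilde is subadditive over deletion and link, and it
   vanishes when v is a cone point.  In Ind(G) the deletion and link of v are Ind(G - v)
   and Ind(G - N[v]).  Splitting TC_n at the vertices 0 and 1 leaves three segments, which
   induce squares of paths; splitting those gives the recurrence
   btilde(P_(k+5)) <= btilde(P_(k+1)) + btilde(P_k), hence btilde(P_m) <= g(m) <= 2^(m/4)
   for m >= 4 with g = [seg_bound], and
   btilde(TC_n) <= g(n-2) + 2 g(n-5) <= 2^((n-2)/4) + 2^((n-1)/4). *)

From mathcomp Require Import all_boot all_order all_algebra.
From mathcomp Require Import zify ring.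
From Stdlib Require Import FunctionalExtensionality.
Set Implicit Arguments. Unset Strict Implicit. Unset Printing Implicit Defensive.
Import GRing.Theory.

Lemma subset_card_succ (T : finType) (A B : {set T}) :
  B \subset A -> #|A| = #|B|.+1 -> exists2 z, z \in A & B = A :\ z.
Proof.
move=> BA cA; have /cards1P[z Dz] : #|A :\: B| == 1%N.
  by rewrite cardsD (setIidPr BA) cA subSnn.
have zA : z \in A by have := set11 z; rewrite -Dz inE => /andP[].
by exists z; rewrite // -Dz setDDr setDv set0U (setIidPr BA).
Qed.

Section Complex.
Variables (K : fieldType) (n : nat).
Local Open Scope ring_scope.
Implicit Types (P : {set 'I_n} -> bool) (S sigma tau rho : {set 'I_n}).

Definition down_closed P := forall S T : {set 'I_n}, T \subset S -> P S -> P T.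

Definition faces_of P s : {set {set 'I_n}} := [set S | P S & #|S| == s].

Lemma in_faces_of P s S : (S \in faces_of P s) = P S && (#|S| == s).
Proof. by rewrite inE. Qed.

Definition bd_coef sigma tau : K :=
  if tau \subset sigma then
    \sum_(v in sigma :\: tau) (-1) ^+ #|[set u in sigma | (u < v)%N]|
  else 0.

Definition bd_of P s : 'M[K]_(#|faces_of P s.+1|, #|faces_of P s|) :=
  \matrix_(i, j) bd_coef (enum_val i) (enum_val j).

Definition kerC_of P s : 'M[K]_(#|faces_of P s|) :=
  match s return 'M[K]_(#|faces_of P s|) with
  | 0 => 1%:M
  | s'.+1 => kermx (bd_of P s')
  end.

Definition redhom_dim_of P s : nat :=
  (\rank (kerC_of P s) - \rank (bd_of P s :&: kerC_of P s)%MS)%N.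

Definition btilde_of P : nat := (\sum_(s < n.+2) redhom_dim_of P s)%N.

Definition sign_below S (v : 'I_n) : K := (-1) ^+ #|[set u in S | (u < v)%N]|.

Lemma sign_below_sqr S v : sign_below S v * sign_below S v = 1.
Proof. by rewrite -expr2 sqrr_sign. Qed.

Lemma sign_belowD1 S x y : x \in S ->
  sign_below S y = (-1) ^+ (x < y)%N * sign_below (S :\ x) y.
Proof.
move=> xS; rewrite /sign_below -exprD (cardsD1 x) !inE xS /=; congr (_ ^+ (_ + _)).
by apply: eq_card => u; rewrite !inE; case: (u == x); rewrite ?andbF ?andbT.
Qed.

Lemma signr_ltn_neq (x y : nat) :
  x != y -> (-1) ^+ (x < y)%N * (-1) ^+ (y < x)%N = - 1 :> K.
Proof. by case: ltngtP => // _ _; rewrite ?expr0 ?expr1 ?mulr1 ?mul1r. Qed.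

Lemma bd_coef_eq0 sigma tau : ~~ (tau \subset sigma) -> bd_coef sigma tau = 0.
Proof. by rewrite /bd_coef => /negbTE->. Qed.

Lemma bd_coef_setD1 S x : x \in S -> bd_coef S (S :\ x) = sign_below S x.
Proof.
move=> xS; rewrite /bd_coef subD1set setDDr setDv set0U (setIidPr _) ?sub1set //.
by rewrite big_set1.
Qed.

Lemma bd_coef_comp_pair S x y : x \in S -> y \in S -> (x < y)%N ->
  bd_coef S (S :\ x) * bd_coef (S :\ x) (S :\ x :\ y)
  + bd_coef S (S :\ y) * bd_coef (S :\ y) (S :\ y :\ x) = 0.
Proof.
move=> xS yS xy; have yx : y != x by rewrite -val_eqE /= gtn_eqF.
have ySx : y \in S :\ x by rewrite !inE yx.
have xSy : x \in S :\ y by rewrite !inE eq_sym yx.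
rewrite !bd_coef_setD1 // (sign_belowD1 y xS) (sign_belowD1 x yS) xy ltnNge ltnW //.
by rewrite expr1 expr0; ring.
Qed.

Lemma setD1_between sigma tau rho :
  rho \subset tau -> tau \subset sigma -> #|sigma| = #|tau|.+1 ->
  exists2 z, z \in sigma :\: rho & tau = sigma :\ z.
Proof.
move=> rt ts cst; have [z zs Dt] := subset_card_succ ts cst.
exists z => //; rewrite inE zs andbT; apply/negP => /(subsetP rt).
by rewrite Dt setD11.
Qed.

Lemma bd_coef_comp_between sigma rho (F : {set {set 'I_n}}) :
  \sum_(tau in F) bd_coef sigma tau * bd_coef tau rho
  = \sum_(tau in [set tau in F | (rho \subset tau) && (tau \subset sigma)])
      bd_coef sigma tau * bd_coef tau rho.
Proof.
rewrite big_mkcond [RHS]big_mkcond; apply: eq_bigr => tau _; rewrite inE.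
case: (tau \in F) => //=; case: ifPn => // /nandP[rt|ts].
  by rewrite (bd_coef_eq0 rt) mulr0.
by rewrite (bd_coef_eq0 ts) mul0r.
Qed.

Lemma bd_coef_comp sigma rho (F : {set {set 'I_n}}) s :
  #|sigma| = s.+2 -> #|rho| = s ->
  (forall tau, tau \subset sigma -> #|tau| = s.+1 -> tau \in F) ->
  (forall tau, tau \in F -> #|tau| = s.+1) ->
  \sum_(tau in F) bd_coef sigma tau * bd_coef tau rho = 0.
Proof.
move=> cs cr inF cardF; rewrite bd_coef_comp_between.
have [rs|nrs] := boolP (rho \subset sigma); last first.
  rewrite big1 // => tau; rewrite inE => /and3P[_ rt ts].
  by case/negP: nrs; apply: subset_trans ts.
have /cards2P[x [y [xy Dxy]]] : #|sigma :\: rho| == 2%N.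
  by rewrite cardsD (setIidPr rs) cs cr; lia.
wlog ltxy : x y xy Dxy / (x < y)%N.
  move=> W; have [lt|gt|eq] := ltngtP x y; first exact: W lt.
    by apply: (W y x); rewrite 1?eq_sym // Dxy setUC.
  by move/val_inj: eq xy => ->; rewrite eqxx.
have inD z : z \in sigma :\: rho -> z \in sigma by rewrite inE => /andP[].
have [xs ys] : x \in sigma /\ y \in sigma by rewrite !inD // Dxy !inE eqxx ?orbT.
have between z : z \in sigma :\: rho ->
    [&& sigma :\ z \in F, rho \subset sigma :\ z & sigma :\ z \subset sigma].
  move=> zD; rewrite subD1set inF ?subD1set //; last first.
    by move: cs; rewrite (cardsD1 z) (inD z zD) => -[].
  by rewrite /= andbT subsetD1 rs; case/setDP: zD.
have -> : [set tau in F | (rho \subset tau) && (tau \subset sigma)]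
          = [set sigma :\ x; sigma :\ y].
  apply/setP => tau; rewrite !inE; apply/idP/idP; last first.
    by case/orP=> /eqP->; apply: between; rewrite Dxy !inE eqxx ?orbT.
  case/andP=> /cardF ct /andP[rt ts]; have [|z] := setD1_between rt ts; first by rewrite cs ct.
  by rewrite Dxy !inE => /orP[]/eqP-> ->; rewrite eqxx ?orbT.
have nxy : sigma :\ x != sigma :\ y by apply/eqP => /setP/(_ x); rewrite !inE eqxx xs xy.
have Drho : rho = sigma :\: [set x; y] by rewrite -Dxy setDDr setDv set0U (setIidPr rs).
rewrite big_setU1 ?inE //= big_set1 -(bd_coef_comp_pair xs ys ltxy) !setDDl.
by rewrite Drho [[set y] :|: _]setUC.
Qed.

Lemma faces_of_eq0 P s : (n < s)%N -> #|faces_of P s| = 0%N.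
Proof.
move=> ns; apply/eqP; rewrite cards_eq0; apply/eqP/setP => S.
rewrite in_faces_of in_set0 ltn_eqF ?andbF // (leq_ltn_trans _ ns) //.
by rewrite -[X in (_ <= X)%N]card_ord max_card.
Qed.

Lemma mulmx_bd_of P s : down_closed P -> bd_of P s.+1 *m bd_of P s = 0.
Proof.
move=> dcP; apply/matrixP => i k; rewrite !mxE.
under eq_bigr do rewrite !mxE.
rewrite -(big_enum_val (fun tau => bd_coef (enum_val i) tau * bd_coef tau (enum_val k))).
have := enum_valP i; rewrite in_faces_of => /andP[Pi /eqP ci].
have := enum_valP k; rewrite in_faces_of => /andP[_ /eqP ck].
apply: (bd_coef_comp ci ck) => [tau ts ct|tau]; last by rewrite in_faces_of => /andP[_ /eqP].
by rewrite in_faces_of ct eqxx (dcP _ _ ts Pi).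
Qed.

Lemma redhom_dim_of_rank P s : down_closed P ->
  (redhom_dim_of P s + \rank (bd_of P s)
    + (if s is s'.+1 then \rank (bd_of P s') else 0))%N = #|faces_of P s|.
Proof.
move=> dcP; rewrite /redhom_dim_of; case: s => [|s] /=.
  rewrite capmxT ?row_full_unit ?unitmx1 // mxrank1 addn0 subnK //.
  exact: rank_leq_col.
have sub : (bd_of P s.+1 <= kermx (bd_of P s))%MS by rewrite sub_kermx mulmx_bd_of.
rewrite (capmx_idPl sub) mxrank_ker subnK ?subnK ?rank_leq_row //.
by rewrite -mxrank_ker mxrankS.
Qed.

Definition nfaces P : nat := (\sum_(s < n.+2) #|faces_of P s|)%N.

Definition bd_rank_sum P : nat := (\sum_(s < n.+1) \rank (bd_of P s))%N.

Lemma btilde_of_euler P : down_closed P ->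
  (btilde_of P + 2 * bd_rank_sum P)%N = nfaces P.
Proof.
move=> dcP; rewrite /nfaces /btilde_of.
under [RHS]eq_bigr => s _ do rewrite -(redhom_dim_of_rank s dcP).
rewrite !big_split /= [X in (_ + _ + X)%N]big_ord_recl [X in (_ + X + _)%N]big_ord_recr /=.
have -> : \rank (bd_of P n.+1) = 0%N.
  by apply/eqP; rewrite -leqn0 -(@faces_of_eq0 P n.+2 (leqnSn n.+1)) rank_leq_row.
by rewrite add0n addn0 mul2n -addnn addnA.
Qed.

End Complex.

Section RankBounds.
Variable K : fieldType.
Local Open Scope ring_scope.

Lemma mxrank_mxsub m1 m2 k1 k2 (f : 'I_k1 -> 'I_m1) (g : 'I_k2 -> 'I_m2)
    (M : 'M[K]_(m1, m2)) :
  (\rank (mxsub f g M) <= \rank M)%N.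
Proof.
have -> : mxsub f g M = rowsub f 1%:M *m (M *m colsub g 1%:M).
  by rewrite mulmxA -rowsubE -mxsub_mul mulmx1.
by rewrite (leq_trans (mxrankM_maxr _ _)) // mxrankM_maxl.
Qed.

Lemma mxrank_block_lower m1 m2 n1 n2 (A : 'M[K]_(m1, n1)) (X : 'M[K]_(m2, n1))
    (B : 'M[K]_(m2, n2)) :
  (\rank A + \rank B <= \rank (block_mx A 0 X B))%N.
Proof.
set M := block_mx A 0 X B; pose pr2 : 'M[K]_(n1 + n2, n2) := col_mx 0 1%:M.
rewrite -(mxrank_mul_ker M pr2).
have -> : M *m pr2 = col_mx 0 B.
  by rewrite /M block_mxEv mul_col_mx !mul_row_col !mulmx0 mul0mx mulmx1 !add0r.
rewrite rank_col_0mx addnC leq_add2l -(@rank_row_mx0 _ _ _ n2 A) mxrankS //.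
rewrite sub_capmx sub_kermx mul_row_col mulmx0 mul0mx addr0 eqxx andbT.
by rewrite /M block_mxEv -addsmxE addsmxSl.
Qed.

Lemma mxrank_diag_scale m1 m2 (r : 'I_m1 -> K) (c : 'I_m2 -> K) (A : 'M[K]_(m1, m2)) :
  (\rank (\matrix_(i < m1, j < m2) (r i * A i j * c j)%R) <= \rank A)%N.
Proof.
have -> : \matrix_(i < m1, j < m2) (r i * A i j * c j)%R
          = diag_mx (\row_i r i) *m A *m diag_mx (\row_j c j).
  by apply/matrixP => i j; rewrite mul_mx_diag mul_diag_mx !mxE.
by rewrite (leq_trans (mxrankM_maxl _ _)) // mxrankM_maxr.
Qed.

Lemma mxrank_diag_full m (A : 'M[K]_m) :
  is_diag_mx A -> (forall i, A i i != 0) -> \rank A = m.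
Proof.
move=> /diag_mxP[d ->] nzA; apply: mxrank_unit.
rewrite unitmxE det_diag unitfE; apply/prodf_neq0 => i _.
by have := nzA i; rewrite mxE eqxx mulr1n.
Qed.

End RankBounds.

Lemma enum_val_map (T : finType) (A B : {set T}) (h : T -> T) :
  {in A, forall x, h x \in B} ->
  {f : 'I_#|A| -> 'I_#|B| | forall i, enum_val (f i) = h (enum_val i)}.
Proof.
move=> hAB; exists (fun i => enum_rank_in (hAB _ (enum_valP i)) (h (enum_val i))).
by move=> i; rewrite enum_rankK_in // hAB // enum_valP.
Qed.

Section Subcomplex.
Variables (K : fieldType) (n : nat).

Lemma faces_of_sub (Q P : {set 'I_n} -> bool) s :
  (forall S, Q S -> P S) -> {in faces_of Q s, forall S, S \in faces_of P s}.
Proof. by move=> QP S; rewrite !in_faces_of => /andP[/QP-> ->]. Qed.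

Lemma rank_bd_of_sub (Q P : {set 'I_n} -> bool) s :
  (forall S, Q S -> P S) -> (\rank (bd_of K Q s) <= \rank (bd_of K P s))%N.
Proof.
move=> QP; have [f Ef] := enum_val_map (faces_of_sub (s := s.+1) QP).
have [g Eg] := enum_val_map (faces_of_sub (s := s) QP).
have -> : bd_of K Q s = mxsub f g (bd_of K P s).
  by apply/matrixP => i j; rewrite !mxE Ef Eg.
exact: mxrank_mxsub.
Qed.

End Subcomplex.

Section DeletionLink.
Variables (K : fieldType) (n : nat) (P : {set 'I_n} -> bool) (v : 'I_n).
Hypothesis dcP : down_closed P.
Local Open Scope ring_scope.
Implicit Types (S sigma tau : {set 'I_n}).

Definition deletion S := P S && (v \notin S).
Definition link S := P (v |: S) && (v \notin S).

Lemma down_closed_deletion : down_closed deletion.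
Proof.
move=> S T TS /andP[PS vS]; rewrite /deletion (dcP TS PS).
by apply: contra vS => /(subsetP TS).
Qed.

Lemma down_closed_link : down_closed link.
Proof.
move=> S T TS /andP[PS vS]; rewrite /link (dcP (setUS [set v] TS) PS).
by apply: contra vS => /(subsetP TS).
Qed.

Lemma bd_coef_link sigma tau : v \notin sigma -> v \notin tau -> #|sigma| = #|tau|.+1 ->
  bd_coef K sigma tau
  = sign_below K sigma v * bd_coef K (v |: sigma) (v |: tau) * - sign_below K tau v.
Proof.
move=> vs vt cst; have [ts|nts] := boolP (tau \subset sigma); last first.
  rewrite !bd_coef_eq0 ?mulr0 ?mul0r //; apply: contra nts => /subsetP vtvs.
  apply/subsetP => u ut; have := vtvs u (setU1r v ut).
  by case/setU1P => // uv; rewrite -uv ut in vt.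
have [z zs ->] := subset_card_succ ts cst; have zv : z != v by apply: contraNneq vs => <-.
have -> : v |: (sigma :\ z) = (v |: sigma) :\ z.
  by apply/setP => u; rewrite !inE; case: eqP => // ->; rewrite eq_sym zv.
rewrite !bd_coef_setD1 ?setU1r // (sign_belowD1 K v zs) (sign_belowD1 K z (setU11 v sigma)).
rewrite setU1K //; set s := sign_below K (sigma :\ z) v.
transitivity (- ((-1) ^+ (z < v)%N * (-1) ^+ (v < z)%N) * (s * s) * sign_below K sigma z).
  by rewrite signr_ltn_neq // sign_below_sqr opprK !mul1r.
by ring.
Qed.

Lemma card_faces_deletion_link s :
  #|faces_of P s.+1| = (#|faces_of deletion s.+1| + #|faces_of link s|)%N.
Proof.
rewrite -(cardsID [set S : {set 'I_n} | v \in S] (faces_of P s.+1)) addnC; congr (_ + _)%N.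
  by apply: eq_card => S; rewrite !inE /deletion; case: (v \in S); rewrite ?andbF ?andbT.
have -> : faces_of P s.+1 :&: [set S : {set 'I_n} | v \in S] = [set v |: T | T in faces_of link s].
  apply/setP => S; rewrite !inE; apply/andP/imsetP => [[/andP[PS /eqP cS] vS]|[T]].
    exists (S :\ v); last by rewrite setD1K.
    by rewrite in_faces_of /link setD1K // PS setD11 -eqSS -cS (cardsD1 v S) vS /= add1n.
  rewrite in_faces_of => /andP[/andP[PT vT] /eqP cT] ->.
  by rewrite PT cardsU1 vT cT setU11 /= add1n.
rewrite card_in_imset // => S T; rewrite !in_faces_of => /andP[/andP[_ vS] _] /andP[/andP[_ vT] _].
by move=> eST; rewrite -(setU1K vS) -(setU1K vT) eST.
Qed.

Lemma card_faces_deletion0 : #|faces_of P 0| = #|faces_of deletion 0|.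
Proof.
apply: eq_card => S; rewrite !in_faces_of /deletion cards_eq0.
by case: eqP => [->|_]; rewrite ?inE ?andbF ?andbT.
Qed.

(* Rows: faces of the deletion, then cones v + S over link faces; columns likewise one
   degree lower.  No face avoiding v contains a face through v. *)
Lemma rank_bd_of_deletion_link s :
  (\rank (bd_of K deletion s.+1) + \rank (bd_of K link s) <= \rank (bd_of K P s.+1))%N.
Proof.
have del_in t : {in faces_of deletion t, forall S, S \in faces_of P t}.
  by apply: faces_of_sub => S /andP[].
have link_in t : {in faces_of link t, forall S, v |: S \in faces_of P t.+1}.
  by move=> S; rewrite !in_faces_of => /andP[/andP[-> vS] /eqP cS]; rewrite cardsU1 vS cS /= add1n.
have [fD EfD] := enum_val_map (del_in s.+2); have [fL EfL] := enum_val_map (link_in s.+1).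
have [gD EgD] := enum_val_map (del_in s.+1); have [gL EgL] := enum_val_map (link_in s).
pose f i := match split i with inl a => fD a | inr b => fL b end.
pose g j := match split j with inl a => gD a | inr b => gL b end.
apply: leq_trans (mxrank_mxsub f g (bd_of K P s.+1)).
rewrite -[mxsub f g _]submxK.
have -> : ursubmx (mxsub f g (bd_of K P s.+1)) = 0.
  apply/matrixP => i j; rewrite !mxE /f /g (unsplitK (inl _)) (unsplitK (inr _)) EfD EgL.
  rewrite bd_coef_eq0 //.
  have := enum_valP i; rewrite in_faces_of => /andP[/andP[_ vS] _].
  by apply: contra vS => /subsetP; apply; apply: setU11.
have -> : ulsubmx (mxsub f g (bd_of K P s.+1)) = bd_of K deletion s.+1.
  by apply/matrixP => i j; rewrite !mxE /f /g !(unsplitK (inl _)) EfD EgD.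
apply: leq_trans (mxrank_block_lower _ _ _); rewrite leq_add2l.
set Q := drsubmx _.
have -> : bd_of K link s = \matrix_(i, j)
    (sign_below K (enum_val i) v * Q i j * - sign_below K (enum_val j) v).
  apply/matrixP => i j; rewrite !mxE /f /g !(unsplitK (inr _)) EfL EgL.
  have := enum_valP i; rewrite in_faces_of => /andP[/andP[_ vi] /eqP ci].
  have := enum_valP j; rewrite in_faces_of => /andP[/andP[_ vj] /eqP cj].
  by rewrite bd_coef_link // ci cj.
exact: mxrank_diag_scale.
Qed.

(* The rows v + S and columns S, for S in the link, form a diagonal block with entries +-1. *)
Lemma card_faces_link_le_rank s : (#|faces_of link s| <= \rank (bd_of K P s))%N.
Proof.
have cone_in : {in faces_of link s, forall S, v |: S \in faces_of P s.+1}.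
  by move=> S; rewrite !in_faces_of => /andP[/andP[-> vS] /eqP cS]; rewrite cardsU1 vS cS /= add1n.
have base_in : {in faces_of link s, forall S, S \in faces_of P s}.
  by apply: faces_of_sub => S /andP[PvS _]; apply: dcP PvS; apply: subsetUr.
have [f Ef] := enum_val_map cone_in; have [g Eg] := enum_val_map base_in.
rewrite -[X in (X <= _)%N](@mxrank_diag_full K _ (mxsub f g (bd_of K P s))).
- exact: mxrank_mxsub.
- apply/is_diag_mxP => i j ij; rewrite !mxE Ef Eg bd_coef_eq0 //.
  have := enum_valP i; rewrite in_faces_of => /andP[/andP[_ vi] /eqP ci].
  have := enum_valP j; rewrite in_faces_of => /andP[/andP[_ vj] /eqP cj].
  apply: contra ij => /subsetP sub_ij; apply/eqP; congr val; apply: enum_val_inj.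
  suff ji : enum_val j \subset enum_val i by apply/eqP; rewrite eq_sym eqEcard ji ci cj leqnn.
  apply/subsetP => u uj; have := sub_ij u uj; case/setU1P => // uv.
  by rewrite -uv uj in vj.
- move=> i; rewrite !mxE Ef Eg.
  have := enum_valP i; rewrite in_faces_of => /andP[/andP[_ vi] _].
  by rewrite -{2}(setU1K vi) bd_coef_setD1 ?setU11 // signr_eq0.
Qed.

Lemma nfaces_deletion_link : nfaces deletion + nfaces link = nfaces P.
Proof.
rewrite /nfaces [X in (_ + X = _)%N]big_ord_recr /= faces_of_eq0 // addn0.
rewrite big_ord_recl [in RHS]big_ord_recl card_faces_deletion0 -addnA -big_split /=.
by congr (_ + _)%N; apply: eq_bigr => i _; rewrite card_faces_deletion_link.
Qed.

Lemma bd_rank_sum_deletion_link :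
  (bd_rank_sum K deletion + bd_rank_sum K link <= bd_rank_sum K P)%N.
Proof.
rewrite /bd_rank_sum [X in (_ <= X)%N]big_ord_recl [X in (X + _ <= _)%N]big_ord_recl.
rewrite [X in (_ + X <= _)%N]big_ord_recr /=.
rewrite (_ : \rank (bd_of K link n) = 0%N); last first.
  by apply/eqP; rewrite -leqn0 -(faces_of_eq0 link (leqnn n.+1)) rank_leq_row.
rewrite addn0 -addnA leq_add //; first by apply: rank_bd_of_sub => S /andP[].
by rewrite -big_split leq_sum // => i _; apply: rank_bd_of_deletion_link.
Qed.

Lemma btilde_of_deletion_link :
  (btilde_of K P <= btilde_of K deletion + btilde_of K link)%N.
Proof.
have := btilde_of_euler K dcP; have := btilde_of_euler K down_closed_deletion.
have := btilde_of_euler K down_closed_link.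
have := nfaces_deletion_link; have := bd_rank_sum_deletion_link; lia.
Qed.

Lemma btilde_of_cone : link = deletion -> btilde_of K P = 0%N.
Proof.
move=> lkE; have := btilde_of_euler K dcP; have := btilde_of_euler K down_closed_deletion.
have : (nfaces link <= bd_rank_sum K P)%N.
  rewrite /nfaces /bd_rank_sum big_ord_recr /= faces_of_eq0 // addn0.
  by apply: leq_sum => i _; apply: card_faces_link_le_rank.
have := nfaces_deletion_link; rewrite lkE; lia.
Qed.

End DeletionLink.

Lemma btilde_of_set0 (K : fieldType) n (P : {set 'I_n} -> bool) :
  down_closed P -> P set0 -> (forall S, P S -> S = set0) -> btilde_of K P = 1%N.
Proof.
move=> dcP P0 P_set0; have := btilde_of_euler K dcP.
have no_faces_pos s : #|faces_of P s.+1| = 0%N.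
  apply: eq_card0 => S; rewrite in_faces_of.
  by apply/negbTE/nandP; case: (boolP (P S)) => [/P_set0->|]; rewrite ?cards0; [right|left].
have -> : nfaces P = 1%N.
  rewrite /nfaces big_ord_recl big1 => [|i _]; last exact: no_faces_pos.
  rewrite addn0 (_ : faces_of P 0 = [set set0]) ?cards1 //.
  apply/setP => S; rewrite in_faces_of !inE cards_eq0.
  by apply/andP/eqP => [[_ /eqP]|->] //; rewrite P0 eqxx.
rewrite /bd_rank_sum big1 ?muln0 ?addn0 // => i _.
by apply/eqP; rewrite -leqn0 -(no_faces_pos i) rank_leq_row.
Qed.

Section TriangularCycle.
Variable n : nat.
Implicit Types (S W : {set 'I_n}) (u v : 'I_n).

Lemma tc_adjE (i j : 'I_n) : tc_adj i j =
  (i != j) && [|| (i <= j + 2) && (j <= i + 2), i + n <= j + 2 | j + n <= i + 2].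
Proof.
rewrite /tc_adj; case: eqVneq => [->|ij] //=.
have ne : (i : nat) <> j by move/val_inj; apply/eqP.
have hi := ltn_ord i; have hj := ltn_ord j.
have -> : (i + n - j) %% n = if j <= i then i - j else i + n - j.
  case: leqP => h; last by rewrite modn_small //; lia.
  by rewrite -addnBAC // modnDr modn_small //; lia.
rewrite !inE; case: leqP => h; apply/idP/idP => H; repeat case/orP: H => H;
  rewrite ?orbF; try lia; apply/orP; lia.
Qed.

Lemma tc_adjC u v : tc_adj u v = tc_adj v u.
Proof.
rewrite !tc_adjE eq_sym; congr (_ && _).
by apply/idP/idP => H; repeat case/orP: H => H; apply/orP; lia.
Qed.

Lemma tc_adjxx v : tc_adj v v = false.
Proof. by rewrite /tc_adj eqxx. Qed.

Lemma tc_indepP S : reflect {in S &, forall u v, ~~ tc_adj u v} (tc_indep S).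
Proof.
apply: (iffP forall_inP) => [indS u v uS vS|indS u uS].
  by have /forall_inP := indS u uS; apply.
by apply/forall_inP => v vS; apply: indS.
Qed.

Definition tc_indep_in W S := tc_indep S && (S \subset W).

Definition tc_nbhd v : {set 'I_n} := [set u | (u == v) || tc_adj v u].

Lemma down_closed_tc_indep_in W : down_closed (tc_indep_in W).
Proof.
move=> S T TS /andP[/tc_indepP indS SW]; rewrite /tc_indep_in (subset_trans TS SW) andbT.
by apply/tc_indepP => u w uT wT; apply: indS; apply: (subsetP TS).
Qed.

Lemma deletion_tc_indep_in W v : deletion (tc_indep_in W) v = tc_indep_in (W :\ v).
Proof.
apply: functional_extensionality => S; rewrite /deletion /tc_indep_in subsetD1.
by rewrite andbA.
Qed.

Lemma tc_indepU1 v S :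
  v \notin S -> tc_indep (v |: S) = tc_indep S && (S \subset ~: tc_nbhd v).
Proof.
move=> vS; apply/tc_indepP/andP => [ind|[/tc_indepP indS /subsetP nN] u w].
  split; first by apply/tc_indepP => u w uS wS; apply: ind; apply: setU1r.
  apply/subsetP => u uS; rewrite !inE negb_or (ind v u) ?setU11 ?setU1r // andbT.
  by apply: contraNneq vS => <-.
rewrite !inE => /orP[/eqP->|uS] /orP[/eqP->|wS]; first by rewrite tc_adjxx.
- by have := nN w wS; rewrite !inE negb_or => /andP[].
- by have := nN u uS; rewrite !inE negb_or tc_adjC => /andP[].
- exact: indS.
Qed.

Lemma link_tc_indep_in W v :
  v \in W -> link (tc_indep_in W) v = tc_indep_in (W :\: tc_nbhd v).
Proof.
move=> vW; apply: functional_extensionality => S.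
rewrite /link /tc_indep_in setDE subsetI subUset sub1set vW /=.
have [vS|vS] := boolP (v \in S).
  rewrite andbF; apply/esym/negbTE; rewrite !negb_and; apply/orP; right; apply/orP; right.
  by apply/subsetPn; exists v; rewrite // !inE eqxx.
by rewrite tc_indepU1 // andbT -andbA [_ && (S \subset W)]andbC.
Qed.

Variable K : fieldType.

Definition btilde_in W : nat := btilde_of K (tc_indep_in W).

Lemma btilde_in_le W v :
  v \in W -> (btilde_in W <= btilde_in (W :\ v) + btilde_in (W :\: tc_nbhd v))%N.
Proof.
move=> vW; rewrite /btilde_in -deletion_tc_indep_in -link_tc_indep_in //.
exact/btilde_of_deletion_link/down_closed_tc_indep_in.
Qed.

Lemma btilde_in_isolated W u :
  u \in W -> {in W, forall w, ~~ tc_adj u w} -> btilde_in W = 0%N.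
Proof.
move=> uW isol; apply: (btilde_of_cone K (@down_closed_tc_indep_in W) (v := u)).
rewrite link_tc_indep_in // deletion_tc_indep_in; congr tc_indep_in.
apply/setP => w; rewrite !inE negb_or; have [wW|] := boolP (w \in W); last by rewrite !andbF.
by rewrite isol // andbT.
Qed.

Lemma btilde_in0 : btilde_in set0 = 1%N.
Proof.
apply: btilde_of_set0; first exact: down_closed_tc_indep_in.
  by rewrite /tc_indep_in sub0set andbT; apply/tc_indepP => u w; rewrite inE.
by move=> S /andP[_]; rewrite subset0 => /eqP.
Qed.

End TriangularCycle.

Fixpoint seg_bound m : nat :=
  match m with
  | 0 => 1 | 1 => 0 | 2 => 1 | 3 => 2 | 4 => 2
  | (k.+1 as k1).+4 => seg_bound k1 + seg_bound k
  end.

Section Segments.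
Variables (K : fieldType) (n : nat).

(* When [m + 2 <= n], no edge of TC_n wraps around [seg a m], which induces the square of
   a path. *)
Definition seg a m : {set 'I_n} := [set i : 'I_n | a <= i < a + m].

Local Notation btilde_in := (btilde_in K).

Ltac seg_lia := rewrite ?inE ?tc_adjE -?val_eqE /=; lia.
Ltac seg_set_eq := apply/setP => i; have := ltn_ord i; seg_lia.

Lemma btilde_in_seg0 a : btilde_in (seg a 0) = 1.
Proof. by rewrite (_ : seg a 0 = set0) ?btilde_in0 //; seg_set_eq. Qed.

Lemma btilde_in_seg1 a : a < n -> btilde_in (seg a 1) = 0.
Proof.
move=> an; apply: (@btilde_in_isolated _ _ _ (Ordinal an)); first by seg_lia.
by move=> w; have := ltn_ord w; seg_lia.
Qed.

Lemma btilde_in_seg_head a m : a + m.+1 <= n -> m.+3 <= n ->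
  btilde_in (seg a m.+1) <= btilde_in (seg a.+1 m) + btilde_in (seg (a + 3) (m - 2)).
Proof.
move=> h1 h2; have an : a < n by lia.
have vW : Ordinal an \in seg a m.+1 by seg_lia.
apply: leq_trans (btilde_in_le K vW) _.
have -> : seg a m.+1 :\ Ordinal an = seg a.+1 m by seg_set_eq.
have -> : seg a m.+1 :\: tc_nbhd (Ordinal an) = seg (a + 3) (m - 2) by seg_set_eq.
by [].
Qed.

(* Split at a+3, whose link has a as an isolated vertex, then at a+2, then at a, whose
   deletion has a+1 as an isolated vertex. *)
Lemma btilde_in_seg_step a k : a + (5 + k) <= n -> k + 7 <= n ->
  btilde_in (seg a (5 + k)) <= btilde_in (seg (a + 4) k.+1) + btilde_in (seg (a + 5) k).
Proof.
move=> h1 h2; have a0 : a < n by lia.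
have a1 : a.+1 < n by lia. have a2 : a + 2 < n by lia. have a3 : a + 3 < n by lia.
have v3 : Ordinal a3 \in seg a (5 + k) by seg_lia.
apply: leq_trans (btilde_in_le K v3) _.
rewrite (@btilde_in_isolated _ _ (seg a (5 + k) :\: tc_nbhd (Ordinal a3)) (Ordinal a0))
  ?addn0; first last.
- by move=> w; have := ltn_ord w; seg_lia.
- by seg_lia.
have v2 : Ordinal a2 \in seg a (5 + k) :\ Ordinal a3 by seg_lia.
apply: leq_trans (btilde_in_le K v2) _.
have -> : seg a (5 + k) :\ Ordinal a3 :\: tc_nbhd (Ordinal a2) = seg (a + 5) k by seg_set_eq.
rewrite leq_add2r.
have v0 : Ordinal a0 \in seg a (5 + k) :\ Ordinal a3 :\ Ordinal a2 by seg_lia.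
apply: leq_trans (btilde_in_le K v0) _.
rewrite (@btilde_in_isolated _ _ (seg a (5 + k) :\ Ordinal a3 :\ Ordinal a2 :\ Ordinal a0)
  (Ordinal a1)) ?add0n; first last.
- by move=> w; have := ltn_ord w; seg_lia.
- by seg_lia.
suff -> : seg a (5 + k) :\ Ordinal a3 :\ Ordinal a2 :\: tc_nbhd (Ordinal a0)
          = seg (a + 4) k.+1 by [].
by seg_set_eq.
Qed.

Lemma btilde_in_seg a m : a + m <= n -> m + 2 <= n -> btilde_in (seg a m) <= seg_bound m.
Proof.
elim/ltn_ind: m a => m IH a h1 h2.
have by_head m' : m'.+1 = m -> seg_bound m' + seg_bound (m' - 2) <= seg_bound m ->
    btilde_in (seg a m) <= seg_bound m.
  move=> Em le; subst m; apply: leq_trans (btilde_in_seg_head _ _) (leq_trans _ le); try lia.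
  apply: leq_add; first by apply: IH; lia.
  have [m'_small|] := ltnP m' 2; last by move=> m'_ge2; apply: IH; lia.
  by rewrite (_ : m' - 2 = 0) ?btilde_in_seg0 //; lia.
case: m IH h1 h2 by_head => [|[|[|[|[|k]]]]] IH h1 h2 by_head.
- by rewrite btilde_in_seg0.
- by rewrite btilde_in_seg1 //; lia.
- exact: (by_head 1).
- exact: (by_head 2).
- exact: (by_head 3).
apply: leq_trans (btilde_in_seg_step (k := k) _ _) _; try lia.
by apply: leq_add; apply: IH; lia.
Qed.

Lemma btilde_tc_le : 9 <= n -> btilde K n <= seg_bound (n - 2) + 2 * seg_bound (n - 5).
Proof.
move=> n9; have n0 : 0 < n by lia. have n1 : 1 < n by lia.
have -> : btilde K n = btilde_in [set: 'I_n].
  rewrite /btilde_in (_ : tc_indep_in _ = @tc_indep n) //.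
  by apply: functional_extensionality => S; rewrite /tc_indep_in subsetT andbT.
apply: leq_trans (btilde_in_le K (in_setT (Ordinal n0))) _.
have -> : [set: 'I_n] :\: tc_nbhd (Ordinal n0) = seg 3 (n - 5) by seg_set_eq.
have v1 : Ordinal n1 \in [set: 'I_n] :\ Ordinal n0 by seg_lia.
apply: leq_trans (leq_add (btilde_in_le K v1) (leqnn _)) _.
have -> : [set: 'I_n] :\ Ordinal n0 :\ Ordinal n1 = seg 2 (n - 2) by seg_set_eq.
have -> : [set: 'I_n] :\ Ordinal n0 :\: tc_nbhd (Ordinal n1) = seg 4 (n - 5) by seg_set_eq.
rewrite mul2n -addnn addnA leq_add ?btilde_in_seg //; try lia.
by rewrite leq_add ?btilde_in_seg //; lia.
Qed.

End Segments.

From Stdlib Require Import Reals Lra.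

Section QuarterPowers.
Local Open Scope R_scope.

Definition quarter_pow2 (m : nat) : R := Rpower 2 (INR m / 4).

Lemma quarter_pow2_gt0 m : 0 < quarter_pow2 m.
Proof. exact: exp_pos. Qed.

Lemma quarter_pow2_0 : quarter_pow2 0 = 1.
Proof. by rewrite /quarter_pow2 /= Rdiv_0_l Rpower_O //; lra. Qed.

Lemma quarter_pow2_add4 m : quarter_pow2 (m + 4) = 2 * quarter_pow2 m.
Proof.
rewrite /quarter_pow2 plus_INR (_ : (INR m + INR 4) / 4 = INR m / 4 + 1); last first.
  by rewrite /=; field.
by rewrite Rpower_plus Rpower_1; lra.
Qed.

Lemma quarter_pow2_sub (m k : nat) : (k <= m)%nat ->
  quarter_pow2 (m - k) = Rpower 2 (INR m / 4) * Rpower 2 (- (INR k / 4)).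
Proof.
move=> km; rewrite /quarter_pow2 -Rpower_plus minus_INR; last exact/leP.
by congr Rpower; field.
Qed.

Lemma quarter_pow2_le (m k : nat) : (m <= k)%nat -> quarter_pow2 m <= quarter_pow2 k.
Proof.
move=> /leP mk; apply: Rle_Rpower; first lra.
by have := le_INR _ _ mk; lra.
Qed.

Lemma quarter_pow2_3 : 3 / 2 <= quarter_pow2 3.
Proof.
have x0 := quarter_pow2_gt0 3.
have x4 : quarter_pow2 3 ^ 4 = 8.
  rewrite -Rpower_pow // /quarter_pow2 Rpower_mult (_ : INR 3 / 4 * INR 4 = INR 3).
    by rewrite Rpower_pow /=; lra.
  by rewrite /=; field.
simpl in x4; apply: Rnot_lt_le => x_lt.
have x2 : quarter_pow2 3 * quarter_pow2 3 < 9 / 4 by nra.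
have : quarter_pow2 3 * quarter_pow2 3 * (quarter_pow2 3 * quarter_pow2 3) < 81 / 16 by nra.
nra.
Qed.

Lemma seg_bound_le (m : nat) : (4 <= m)%nat -> INR (seg_bound m) <= quarter_pow2 m.
Proof.
have x4 : quarter_pow2 4 = 2 by rewrite -[4%nat]/(0 + 4)%nat quarter_pow2_add4 quarter_pow2_0; lra.
elim/ltn_ind: m => m IH m4.
case: m IH m4 => [|[|[|[|[|[|[|[|[|k]]]]]]]]] IH m4 //.
- by rewrite x4 /=; lra.
- by have := @quarter_pow2_le 4 5 isT; rewrite x4 /=; lra.
- by have := @quarter_pow2_le 4 6 isT; rewrite x4 /=; lra.
- by rewrite -[7%nat]/(3 + 4)%nat quarter_pow2_add4 /=; have := quarter_pow2_3; lra.
- by rewrite -[8%nat]/(4 + 4)%nat quarter_pow2_add4 x4 /=; lra.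
have -> : seg_bound k.+1.+4.+4 = (seg_bound k.+1.+4 + seg_bound k.+4)%nat by [].
rewrite plus_INR (_ : k.+1.+4.+4 = (k.+1.+4 + 4)%nat) ?quarter_pow2_add4; last by lia.
have := IH k.+1.+4 ltac:(lia) ltac:(lia); have := IH k.+4 ltac:(lia) ltac:(lia).
by have := @quarter_pow2_le k.+4 k.+1.+4 ltac:(lia); lra.
Qed.

End QuarterPowers.

Theorem lemmaA21 (K : fieldType) (n : nat) :
  (9 <= n)%N ->
  (INR (btilde K n) <=
   Rpower 2 (INR n / 4) * (Rpower 2 (- (1 / 2)) + Rpower 2 (- (1 / 4))))%R.
Proof.
move=> n9; apply: (Rle_trans _ (INR (seg_bound (n - 2) + 2 * seg_bound (n - 5)))).
  exact/le_INR/leP/btilde_tc_le.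
have g2 := @seg_bound_le (n - 2) ltac:(lia); have g5 := @seg_bound_le (n - 5) ltac:(lia).
have e2 : quarter_pow2 (n - 2) = (Rpower 2 (INR n / 4) * Rpower 2 (- (1 / 2)))%R.
  by rewrite quarter_pow2_sub; [congr (_ * Rpower 2 _)%R; simpl; field | lia].
have e5 : (2 * quarter_pow2 (n - 5) = Rpower 2 (INR n / 4) * Rpower 2 (- (1 / 4)))%R.
  rewrite -quarter_pow2_add4 (_ : (n - 5 + 4 = n - 1)%N) ?quarter_pow2_sub; try lia.
  by congr (_ * Rpower 2 _)%R; simpl; field.
rewrite plus_INR mult_INR Rmult_plus_distr_l -e2 -e5 (_ : INR 2 = 2%R) /=; lra.
Qed.
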